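(* Let $\phi$ be a cocycle with respect to $\theta$ on $\mathbb{R}^+\times\Sigma\times X$ having a bounded pullback absorbing set $\{B_\sigma\}_{\sigma\in\Sigma}$ (not necessarily nested). Assume that for every $\varepsilon>0$ and every $\sigma\in\Sigma$ there exist $T=T(\sigma,\varepsilon)\ge0$ and a function $\psi_{T,\sigma}\in\mathrm{Contr}(B_{\theta_{-T}(\sigma)})$ such that $$\|\phi(T,\theta_{-T}(\sigma);x)-\phi(T,\theta_{-T}(\sigma);y)\|\le\varepsilon+\psi_{T,\sigma}(x,y)\quad\text{for all }x,y\in B_{\theta_{-T}(\sigma)}.$$ Then $\phi$ is pullback asymptotically compact.
   Context: Let $X$ be a Banach space with norm $\|\cdot\|$. Let $\Sigma$ be a set and $\theta=\{\theta_t\}_{t\in\mathbb{R}}$ a group of bijections $\theta_t:\Sigma\to\Sigma$ with $\theta_0=\mathrm{id}$ and $\theta_{t+\tau}=\theta_t\circ\theta_\tau$. A cocycle with respect to $\theta$ is a map $\phi:\mathbb{R}^+\times\Sigma\times X\to X$ with $\phi(0,\sigma;x)=x$ and $\phi(s+t,\sigma;x)=\phi(s,\theta_t(\sigma);\phi(t,\sigma;x))$ for all $s,t\ge 0$. For $B\subset X$, $\phi(t,\sigma;B)=\{\phi(t,\sigma;x):x\in B\}$. A bounded pullback absorbing set is a family $\{B_\sigma\}_{\sigma\in\Sigma}$ of bounded subsets of $X$ such that for every $\sigma$ and bounded $B\subset X$ there is $T\ge0$ with $\phi(t,\theta_{-t}(\sigma);B)\subset B_\sigma$ for all $t\ge T$.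 For a bounded set $B\subset X$, $\mathrm{Contr}(B)$ denotes the set of functions $\psi:X\times X\to\mathbb{R}$ such that every sequence $\{x_n\}\subset B$ has a subsequence $\{x_{n_k}\}$ with $\lim_{k\to\infty}\lim_{l\to\infty}\psi(x_{n_k},x_{n_l})=0$. $\phi$ is pullback asymptotically compact if for each $\sigma\in\Sigma$, every bounded sequence $\{x_n\}\subset X$ and every $\{t_n\}\subset\mathbb{R}^+$ with $t_n\to+\infty$, the sequence $\{\phi(t_n,\theta_{-t_n}(\sigma);x_n)\}$ is precompact in $X$. *)

From HB Require Import structures.
From mathcomp Require Import all_boot all_order all_algebra.
From mathcomp Require Import all_classical all_reals all_analysis.
Set Implicit Arguments. Unset Strict Implicit. Unset Printing Implicit Defensive.
Import Order.TTheory GRing.Theory Num.Theory.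
Import numFieldNormedType.Exports.
Local Open Scope classical_set_scope.
Local Open Scope ring_scope.

Definition is_flow (R : realType) (Sigma : Type) (theta : R -> Sigma -> Sigma) :=
  [/\ forall t, bijective (theta t),
      forall s, theta 0 s = s &
      forall t tau s, theta (t + tau) s = theta t (theta tau s)].

(* phi : R^+ x Sigma x X -> X is represented as R -> Sigma -> X -> X; only
   its values at nonnegative times are ever used. *)
Definition is_cocycle (R : realType) (Sigma : Type) (X : Type)
  (theta : R -> Sigma -> Sigma) (phi : R -> Sigma -> X -> X) :=
  (forall s x, phi 0 s x = x) /\
  (forall t tau s x, 0 <= t -> 0 <= tau ->
     phi (t + tau) s x = phi t (theta tau s) (phi tau s x)).

Definition pullback_absorbing (R : realType) (Sigma : Type)
  (X : normedModType R) (theta : R -> Sigma -> Sigma)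
  (phi : R -> Sigma -> X -> X) (B : Sigma -> set X) :=
  (forall s, bounded_set (B s)) /\
  (forall s (D : set X), bounded_set D ->
     exists T, 0 <= T /\
       forall t, T <= t -> phi t (theta (- t) s) @` D `<=` B s).

Definition Contr (R : realType) (X : Type) (B : set X) (psi : X -> X -> R) :=
  forall x : nat -> X, (forall n, B (x n)) ->
    exists (nk : nat -> nat) (L : nat -> R),
      {homo nk : m n / (m < n)%N} /\
      (forall k, (fun l => psi (x (nk k)) (x (nk l))) @ \oo --> L k) /\
      L @ \oo --> (0 : R).

Definition pullback_asymptotically_compact (R : realType) (Sigma : Type)
  (X : normedModType R) (theta : R -> Sigma -> Sigma)
  (phi : R -> Sigma -> X -> X) :=
  forall s (x : nat -> X) (t : nat -> R),
    bounded_set (range x) ->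
    (forall n, 0 <= t n) ->
    t @ \oo --> +oo ->
    precompact (range (fun n => phi (t n) (theta (- t n) s) (x n))).

From HB Require Import structures.
From mathcomp Require Import all_boot all_order all_algebra.
From mathcomp Require Import all_classical all_reals all_analysis.
From mathcomp Require Import ring lra.
Set Implicit Arguments. Unset Strict Implicit. Unset Printing Implicit Defensive.
Import Order.TTheory GRing.Theory Num.Theory.
Import numFieldNormedType.Exports.
Local Open Scope classical_set_scope.
Local Open Scope ring_scope.

(* Given eps, split each time t_n as T(eps) + (t_n - T): past some index, the
   n-th term is phi(T) applied to a point of the absorbing set at theta(-T) s.
   Along any subsequence, Contr yields two of these points with psi < eps, so
   their images are less than 2 eps apart.  Thus the sequence has no
   2 eps-separated subsequence for any eps, and in a complete space this
   total boundedness is precompactness. *)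

Section TotallyBounded.
Variables (R : realType) (X : completePseudoMetricType R).

Lemma ultra_seq_ball (F : set_system X) (s : seq X) (e : R) : UltraFilter F ->
  F [set y | exists2 c, c \in s & ball c e y] -> exists c, F (ball c e).
Proof.
move=> FU; elim: s => [|c s IH] /= Fs.
  have : F set0 by apply: filterS Fs => y [c].
  by move/filter_ex => [].
have [Fc|Fnc] := in_ultra_setVsetC (ball c e) FU; first by exists c.
apply: IH; apply: filterS (filterI Fs Fnc) => y [[d]].
by rewrite inE => /orP [/eqP -> //|ds] dy _; exists d.
Qed.

Lemma totally_bounded_precompact (A : set X) :
  (forall e, 0 < e -> exists s : seq X,
     A `<=` [set y | exists2 c, c \in s & ball c e y]) -> precompact A.
Proof.
move=> tb; rewrite precompactE compact_ultra => F FU FA.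
have PF : ProperFilter F by exact: ultra_proper.
have F_cauchy : cauchy_ex F.
  move=> e e0; have e20 : 0 < e / 2 by rewrite divr_gt0.
  have [s As] := tb _ e20.
  apply: (ultra_seq_ball (s := s) FU); apply: filterS FA => y Ay.
  have [a [Aa ya]] := Ay _ (nbhsx_ballx y (e / 2) e20).
  have [c cs ca] := As a Aa.
  exists c => //; rewrite [e]splitr.
  exact: ball_triangle ca (ball_sym ya).
have cF : cvg F by apply: cauchy_cvg; apply/cauchyP.
exists (lim F); split; last exact: cF.
exact: (@closed_cvg X X F PF id _ (@closed_closure _ A) FA _ cF).
Qed.

Lemma precompact_range_nonseparated (y : nat -> X) :
  (forall e, 0 < e -> exists N, forall m : nat -> nat, (forall k, N <= m k)%N ->
     exists j k, (j < k)%N /\ ball (y (m j)) e (y (m k))) ->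
  precompact (range y).
Proof.
move=> near_pairs; apply: totally_bounded_precompact => e e0.
have [N pairN] := near_pairs e e0.
apply: contrapT => no_cover.
have uncovered (s : seq X) : exists n, forall c, c \in s -> ~ ball c e (y n).
  apply: contrapT => covered; apply: no_cover; exists s => _ [n _ <-].
  apply: contrapT => yn_far; apply: covered; exists n => c cs ce.
  by apply: yn_far; exists c.
have [pick pickP] := choice uncovered.
(* Greedy construction: [L k] lists y 0, ..., y (N-1) and the first k picks;
   starting with the former forces every pick to have index at least N. *)
pose L := fix L k := if k is k'.+1 then y (pick (L k')) :: L k'
                     else [seq y i | i <- iota 0 N].
have L_mono j k : (j <= k)%N -> {subset L j <= L k}.
  move=> /subnK <-; elim: (k - j)%N => //= n IH w /IH.
  by rewrite inE => ->; rewrite orbT.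
have pick_ge k : (N <= pick (L k))%N.
  rewrite leqNgt; apply/negP => lt.
  apply: (pickP (L k) (y (pick (L k)))); last exact: ballxx.
  apply: (L_mono 0%N k) => //=; apply/mapP; exists (pick (L k)) => //.
  by rewrite mem_iota.
have [j [k [jk]]] := pairN _ pick_ge.
apply: pickP; apply: (L_mono j.+1 k jk).
by rewrite /= inE eqxx.
Qed.

End TotallyBounded.

Lemma Contr_small_pair (R : realType) (T : Type) (A : set T)
    (psi : T -> T -> R) (x : nat -> T) (d : R) :
  Contr A psi -> (forall n, A (x n)) -> 0 < d ->
  exists j k, (j < k)%N /\ psi (x j) (x k) < d.
Proof.
move=> psiC Ax d0.
have [nk [L [nk_incr [cvg_row cvg_L]]]] := psiC x Ax.
have d20 : 0 < d / 2 by rewrite divr_gt0.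
have [K _ LK] := (cvgrPdist_lt _ _).1 cvg_L _ d20.
have [M _ rowM] := (cvgrPdist_lt _ _).1 (cvg_row K) _ d20.
pose l := maxn M K.+1.
have Kl : (K < l)%N by rewrite leq_max leqnn orbT.
exists (nk K), (nk l); split; first exact: nk_incr.
have := LK K (leqnn K); have := rowM l (leq_maxl _ _).
rewrite /= sub0r normrN distrC => close_L small_L.
have := ler_norm (psi (x (nk K)) (x (nk l)) - L K).
have := ler_norm (L K); lra.
Qed.

Lemma pullback_cocycle_split (R : realType) (Sigma X : Type)
    (theta : R -> Sigma -> Sigma) (phi : R -> Sigma -> X -> X)
    (s : Sigma) (T t : R) (x : X) :
  is_flow theta -> is_cocycle theta phi -> 0 <= T -> T <= t ->
  phi t (theta (- t) s) x =
  phi T (theta (- T) s) (phi (t - T) (theta (- (t - T)) (theta (- T) s)) x).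
Proof.
move=> [_ _ theta_add] [_ phi_add] T0 Tt.
have flow_back : theta (- (t - T)) (theta (- T) s) = theta (- t) s.
  by rewrite -theta_add; congr theta; ring.
have flow_fwd : theta (- T) s = theta (t - T) (theta (- t) s).
  by rewrite -theta_add; congr theta; ring.
rewrite flow_back flow_fwd -phi_add ?subr_ge0 //.
by congr phi; ring.
Qed.

Theorem corollary4p3 (R : realType) (X : completeNormedModType R) (Sigma : Type)
  (theta : R -> Sigma -> Sigma) (phi : R -> Sigma -> X -> X)
  (B : Sigma -> set X) :
  is_flow theta ->
  is_cocycle theta phi ->
  pullback_absorbing theta phi B ->
  (forall (eps : R) (s : Sigma), 0 < eps ->
     exists T : R, 0 <= T /\
     exists psi : X -> X -> R,
       Contr (B (theta (- T) s)) psi /\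
       forall x y, B (theta (- T) s) x -> B (theta (- T) s) y ->
         `|phi T (theta (- T) s) x - phi T (theta (- T) s) y| <= eps + psi x y) ->
  pullback_asymptotically_compact theta phi.
Proof.
move=> flow cocycle [_ absorb] contract s x t bx _ t_oo.
apply: precompact_range_nonseparated => e e0.
have e30 : 0 < e / 3 by rewrite divr_gt0.
have [T [T0 [psi [psiC psi_bound]]]] := contract _ s e30.
set s' := theta (- T) s in psiC psi_bound.
have [Ta [Ta0 absorbTa]] := absorb s' (range x) bx.
have [N _ t_large] : \forall n \near \oo, T + Ta <= t n.
  by move/cvgryPge: t_oo; apply.
exists N => m m_ge.
pose z k := phi (t (m k) - T) (theta (- (t (m k) - T)) s') (x (m k)).
have t_ge k : T + Ta <= t (m k) by apply: t_large; exact: m_ge.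
have zB k : B s' (z k).
  apply: (absorbTa (t (m k) - T)); first by have := t_ge k; lra.
  by exists (x (m k)) => //; exists (m k).
have [j [k [jk psi_small]]] := Contr_small_pair psiC zB e30.
exists j, k; split=> //.
have y_eq n : phi (t (m n)) (theta (- t (m n)) s) (x (m n)) = phi T s' (z n).
  have Tt : T <= t (m n) by have := t_ge n; lra.
  exact: (pullback_cocycle_split s (x (m n)) flow cocycle T0 Tt).
rewrite -ball_normE /ball_ /= (y_eq j) (y_eq k).
apply: le_lt_trans (psi_bound _ _ (zB j) (zB k)) _; lra.
Qed.
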